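(* For every integer $m\ge 5$, the independence polynomial $I(T_{m,2};t)$ is unimodal and its mode belongs to $\{\rho_m,\rho_m+1\}$, where $\rho_m$ denotes the mode of the independence polynomial $I(C_m;t)$ of the cycle $C_m$.
   Context: For a simple graph $G$, the independence polynomial is $I(G;t)=\sum_{k\ge 0}s_k(G)t^k$, where $s_k(G)$ is the number of independent sets (sets of pairwise non-adjacent vertices) of size $k$ in $G$. $C_m$ is the cycle on $m$ vertices; its independence polynomial is known to be unimodal. For integers $m\ge 3$, $n\ge 1$, the tadpole graph $T_{m,n}$ is the simple graph with vertex set $\{x_1,\dots,x_m,y_1,\dots,y_n\}$ and edges $\{x_i,x_{i+1}\}$ for $1\le i\le m-1$, $\{x_m,x_1\}$, $\{y_j,y_{j+1}\}$ for $1\le j\le n-1$, and $\{x_m,y_1\}$. A polynomial $\sum a_kt^k$ with nonnegative coefficients is unimodal if $a_0\le\cdots\le a_m\ge a_{m+1}\ge\cdots$ for some $m$; with $a_{-1}=0$, its mode is the unique $i$ with $a_{i-1}<a_i\ge a_{i+1}\ge a_{i+2}\ge\cdots$. *)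

From mathcomp Require Import all_boot.
Set Implicit Arguments. Unset Strict Implicit. Unset Printing Implicit Defensive.

(* A simple graph is given by a (symmetric, irreflexive) adjacency relation
   on a finite vertex type. *)
Definition independent (T : finType) (adj : rel T) (S : {set T}) : bool :=
  [forall x in S, forall y in S, ~~ adj x y].

(* s_k(G): number of independent sets of size k. These are the coefficients
   of the independence polynomial I(G;t) = sum_k s_k(G) t^k. *)
Definition indep_coef (T : finType) (adj : rel T) (k : nat) : nat :=
  #|[set S : {set T} | independent adj S && (#|S| == k)]|.

Definition unimodal (a : nat -> nat) : Prop :=
  exists m, (forall i, i < m -> a i <= a i.+1) /\ (forall i, m <= i -> a i.+1 <= a i).

Definition is_mode (a : nat -> nat) (i : nat) : Prop :=
  (if i is j.+1 then a j < a i else 0 < a 0) /\ (forall j, i <= j -> a j.+1 <= a j).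

(* Cycle C_m on vertices x_1..x_m encoded as 0..m-1. *)
Definition cycle_edge (m : nat) (a b : nat) : bool :=
  ((a.+1 == b) && (b < m)) || ((a == m.-1) && (b == 0)).
Definition cycle_adj (m : nat) : rel 'I_m :=
  fun u v => cycle_edge m u v || cycle_edge m v u.

(* Tadpole T_{m,n}: x_1..x_m encoded as 0..m-1, y_1..y_n as m..m+n-1.
   Edges: x_i x_{i+1}, x_m x_1, y_j y_{j+1}, x_m y_1. *)
Definition tadpole_edge (m n : nat) (a b : nat) : bool :=
  [|| (a.+1 == b) && (b < m),
      (a == m.-1) && (b == 0),
      [&& m <= a, a.+1 == b & b < m + n]
    | (a == m.-1) && (b == m) && (0 < n)].
Definition tadpole_adj (m n : nat) : rel 'I_(m + n) :=
  fun u v => tadpole_edge m n u v || tadpole_edge m n v u.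
Arguments cycle_adj m : clear implicits.
Arguments tadpole_adj m n : clear implicits.

From mathcomp Require Import all_boot zify.
Set Implicit Arguments. Unset Strict Implicit. Unset Printing Implicit Defensive.

(** Index the vertices x_1, ..., x_m, y_1, y_2 by 0, ..., m+1 and encode a vertex
    set by its indicator bit string.  Both C_m and T_{m,2} are then a path with the
    single chord 0 -- (m-1), so their independent sets are the bit strings with no two
    adjacent ones that do not contain both ends of the chord.  Splitting on the first
    bits (of the reversed string, for the tadpole) gives
      s_k(C_m) = C(m-k, k) + C(m-k-1, k-1),
      s_{k+1}(T_{m,2}) = s_{k+1}(C_m) + C(m-k, k) + s_k(C_m).
    Moreover (j+1)(m-j-1) s_{j+1}(C_m) = (m-2j)(m-2j-1) s_j(C_m) and
    (j+1)(m-j) C(m-j-1, j+1) = (m-2j)(m-2j-1) C(m-j, j).  Let rho be the first j at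
    which the first ratio drops to at most 1; it is the mode of C_m, and the second
    ratio is then at least 1 for j < rho - 1 and at most 1 for j >= rho.  Summing, the
    tadpole coefficients increase strictly up to rho and decrease from rho + 1 on. *)

(** * Unimodal sequences *)

Lemma peak_mode (a : nat -> nat) r :
  0 < r -> (forall j, j < r -> a j < a j.+1) ->
  (forall j, r <= j -> a j.+1 <= a j) -> unimodal a /\ is_mode a r.
Proof.
move=> r_gt0 a_up a_down; split; first by exists r; split=> // j /a_up /ltnW.
by case: r r_gt0 a_up a_down => // r _ a_up a_down; split; [exact: a_up|].
Qed.

Lemma shifted_sum_mode (a b t : nat -> nat) r :
  0 < r ->
  (forall j, j < r -> a j < a j.+1) -> (forall j, r <= j -> a j.+1 <= a j) ->
  (forall j, j.+1 < r -> b j <= b j.+1) -> (forall j, r <= j -> b j.+1 <= b j) ->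
  t 0 = a 0 -> (forall k, t k.+1 = a k.+1 + b k + a k) ->
  unimodal t /\ exists2 i, is_mode t i & i = r \/ i = r.+1.
Proof.
move=> r_gt0 a_up a_down b_up b_down t0 tS.
have t_up j : j < r -> t j < t j.+1.
  case: j => [|j] j_lt; rewrite !tS ?t0; first by have := a_up 0 r_gt0; lia.
  by have := a_up _ j_lt; have := a_up j (ltnW j_lt); have := b_up j j_lt; lia.
have t_down j : r < j -> t j.+1 <= t j.
  case: j => [|j] // j_gt; rewrite !tS.
  by have := a_down _ (leqW j_gt); have := a_down j j_gt; have := b_down j j_gt; lia.
have [t_peak | t_rise] := leqP (t r.+1) (t r).
  have [t_uni t_mode] : unimodal t /\ is_mode t r.
    by apply: peak_mode => // j; rewrite leq_eqVlt => /predU1P [<- | /t_down].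
  by split=> //; exists r; [|left].
have [t_uni t_mode] : unimodal t /\ is_mode t r.+1.
  by apply: peak_mode => // j; rewrite ltnS leq_eqVlt => /predU1P [-> | /t_up].
by split=> //; exists r.+1; [|right].
Qed.

(** * Independent sets of a path as bit strings *)

Fixpoint bitseqs n : seq bitseq :=
  if n is n'.+1 then map (cons false) (bitseqs n') ++ map (cons true) (bitseqs n')
  else [:: [::]].

Lemma mem_map_cons (T : eqType) (x y : T) (s : seq T) X :
  (x :: s \in map (cons y) X) = (x == y) && (s \in X).
Proof.
by apply/mapP/andP => [[t t_in [-> ->]] | [/eqP -> s_in]]; [rewrite eqxx | exists s].
Qed.

Lemma mem_bitseqs n s : (s \in bitseqs n) = (size s == n).
Proof.
elim: n s => [|n IHn] [|b s] //=; rewrite mem_cat ?mem_map_cons ?IHn //.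
  by apply/norP; split; apply/mapP => -[].
by rewrite eqSS; case: b; rewrite /= ?orbF.
Qed.

Lemma uniq_bitseqs n : uniq (bitseqs n).
Proof.
elim: n => //= n IHn; rewrite cat_uniq !map_inj_uniq ?IHn //=; try by move=> ? ? [].
rewrite andbT; apply/hasPn => _ /mapP [s _ ->]; by rewrite mem_map_cons.
Qed.

Lemma count_bitseqs_rev n (P : pred bitseq) :
  count (fun s => P (rev s)) (bitseqs n) = count P (bitseqs n).
Proof.
rewrite -count_map; move: P; apply/permP/uniq_perm.
- by rewrite map_inj_uniq ?uniq_bitseqs //; exact: (can_inj revK).
- exact: uniq_bitseqs.
move=> s; rewrite mem_bitseqs; apply/mapP/eqP => [[t] | s_n].
  by rewrite mem_bitseqs => /eqP t_n ->; rewrite size_rev.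
by exists (rev s); rewrite ?revK // mem_bitseqs size_rev s_n.
Qed.

Fixpoint path_indep (s : bitseq) : bool :=
  if s is b :: t then ~~ (b && head false t) && path_indep t else true.

Lemma path_indepP s :
  reflect (forall i, ~~ (nth false s i && nth false s i.+1)) (path_indep s).
Proof.
elim: s => [|b s IHs] /=; first by constructor => i; rewrite nth_nil.
apply: (iffP andP) => [[bs /IHs s_indep] [|i] | s_indep].
- by case: s bs {IHs s_indep}.
- exact: s_indep.
split; last by apply/IHs => i; exact: s_indep i.+1.
by case: s s_indep {IHs} => [|c s] /(_ 0).
Qed.

Lemma path_indep_rcons s b :
  path_indep (rcons s b) = path_indep s && ~~ (last false s && b).
Proof.
elim: s => [|c s IHs] /=; first by case: b.
rewrite IHs; case: s {IHs} => [|d t] /=; first by case: b; case: c.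
by rewrite andbA.
Qed.

Lemma path_indep_rev s : path_indep (rev s) = path_indep s.
Proof.
elim: s => //= b s IHs; rewrite rev_cons path_indep_rcons IHs.
case: s {IHs} => [|c s]; first by rewrite andbF.
by rewrite rev_cons last_rcons andbC (andbC c).
Qed.

Definition weight_count (P : pred bitseq) n k :=
  count (fun s => P s && (count id s == k)) (bitseqs n).

Definition path_count := weight_count path_indep.

Lemma eq_weight_count n (P Q : pred bitseq) :
  (forall s, size s = n -> P s = Q s) -> weight_count P n =1 weight_count Q n.
Proof. by move=> PQ k; apply: eq_in_count => s; rewrite mem_bitseqs => /eqP/PQ ->. Qed.

Lemma weight_count_rev P n k :
  weight_count (fun s => P (rev s)) n k = weight_count P n k.
Proof. by rewrite -[RHS]count_bitseqs_rev; apply: eq_count => s; rewrite /= count_rev. Qed.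

Lemma weight_countS P n k :
  weight_count P n.+1 k = weight_count (fun s => P (false :: s)) n k +
    (if k is j.+1 then weight_count (fun s => P (true :: s)) n j else 0).
Proof.
rewrite /weight_count /= count_cat !count_map; congr (_ + _).
case: k => [|j]; last by apply: eq_count => s; rewrite /= add1n eqSS.
by rewrite (eq_count (a2 := pred0)) ?count_pred0 // => s; rewrite /= andbF.
Qed.

Lemma weight_count_head0 P n k : (forall s, P (true :: s) = false) ->
  weight_count P n.+1 k = weight_count (fun s => P (false :: s)) n k.
Proof.
move=> P_true; rewrite weight_countS; case: k => [|j]; rewrite ?addn0 //.
by rewrite /weight_count [X in _ + X](eq_count (a2 := pred0)) ?count_pred0 ?addn0 //
  => s; rewrite /= P_true.
Qed.

Lemma path_countSS n k :
  path_count n.+2 k = path_count n.+1 k + (if k is j.+1 then path_count n j else 0).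
Proof.
by rewrite /path_count weight_countS; case: k => // j; rewrite [X in _ + X]weight_count_head0.
Qed.

Lemma path_count_bin n k : path_count n k = 'C(n.+1 - k, k).
Proof.
elim/ltn_ind: n k => -[|[|n]] IHn k; try by case: k => [|[|[]]].
rewrite path_countSS (IHn n.+1) //; case: k => [|j]; rewrite ?bin0 // IHn // !subSS.
case: (leqP j n.+1) => [j_le | j_gt]; last by rewrite !bin_small //; lia.
by rewrite [n.+2 - j]subSn // binS addnC.
Qed.

Lemma path_count_last0 n k :
  weight_count (fun s => ~~ nth false s n && path_indep s) n.+1 k = path_count n k.
Proof.
rewrite -weight_count_rev (@eq_weight_count _ _ (fun s => ~~ head false s && path_indep s)).
  by rewrite weight_count_head0.
by move=> s s_n; rewrite path_indep_rev nth_rev s_n // subnn.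
Qed.

(** * Paths with one chord *)

Definition bits N (S : {set 'I_N}) : bitseq := [seq x \in S | x <- enum 'I_N].

Lemma size_bits N (S : {set 'I_N}) : size (bits S) = N.
Proof. by rewrite size_map size_enum_ord. Qed.

Lemma nth_bits N (S : {set 'I_N}) (x : 'I_N) : nth false (bits S) x = (x \in S).
Proof. by rewrite (nth_map x) ?size_enum_ord // nth_ord_enum. Qed.

Lemma bits_inj N : injective (@bits N).
Proof. by move=> S1 S2 eqS; apply/setP => x; rewrite -!nth_bits eqS. Qed.

Lemma perm_bits N : perm_eq [seq bits A | A : {set 'I_N}] (bitseqs N).
Proof.
apply: uniq_perm; [|exact: uniq_bitseqs|].
  by rewrite map_inj_uniq -?enumT ?enum_uniq //; exact: bits_inj.
move=> s; rewrite mem_bitseqs; apply/mapP/eqP => [[A _ ->] | s_N]; first exact: size_bits.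
exists [set x : 'I_N | nth false s x]; rewrite -?enumT ?mem_enum //.
apply: (@eq_from_nth _ false) => [|i]; first by rewrite size_bits.
rewrite s_N => i_lt; by rewrite -[i]/(val (Ordinal i_lt)) nth_bits inE.
Qed.

Lemma card_bits N (P : pred bitseq) :
  #|[set S : {set 'I_N} | P (bits S)]| = count P (bitseqs N).
Proof.
rewrite -(permP (perm_bits N)) count_map cardE size_filter enumT.
by apply: eq_count => A /=; rewrite inE.
Qed.

Lemma count_bits N (S : {set 'I_N}) : count id (bits S) = #|S|.
Proof. by rewrite count_map cardE size_filter enumT. Qed.

(* The path 0 - 1 - ... - (N-1) with the chord e - 0: C_m is the case N = m, e = m-1,
   and T_{m,2} the case N = m+2, e = m-1. *)
Definition chord_edge N e (a b : nat) : bool :=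
  ((a.+1 == b) && (b < N)) || ((a == e) && (b == 0)).

Definition chord_adj N e : rel 'I_N :=
  fun u v => chord_edge N e u v || chord_edge N e v u.
Arguments chord_adj : clear implicits.

Definition chord_indep e (s : bitseq) : bool :=
  ~~ (nth false s 0 && nth false s e) && path_indep s.

Lemma independent_chord N e (S : {set 'I_N}) :
  e < N -> independent (chord_adj N e) S = chord_indep e (bits S).
Proof.
move=> e_lt; apply/forall_inP/andP => [S_indep | [chord_ok /path_indepP path_ok] x xS].
  have nadj (x y : 'I_N) : x \in S -> y \in S -> ~~ chord_adj N e x y.
    by move=> xS yS; have /forall_inP := S_indep x xS; apply.
  split.
    have N_gt0 : 0 < N by apply: leq_ltn_trans e_lt.
    rewrite -[0]/(val (Ordinal N_gt0)) -[e]/(val (Ordinal e_lt)) !nth_bits.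
    apply/andP => -[x0 xe]; have := nadj _ _ xe x0.
    by rewrite /chord_adj /chord_edge !eqxx orbT.
  apply/path_indepP => i; case: (ltnP i.+1 N) => [i_lt | i_ge].
    rewrite -[i]/(val (Ordinal (ltnW i_lt))) -[i.+1]/(val (Ordinal i_lt)) !nth_bits.
    apply/andP => -[xS yS]; have := nadj _ _ xS yS.
    by rewrite /chord_adj /chord_edge eqxx i_lt.
  by rewrite [nth _ _ i.+1]nth_default ?andbF ?size_bits.
apply/forall_inP => y yS; apply/negP; rewrite /chord_adj /chord_edge.
case/orP=> /orP[] /andP[/eqP xy].
- by move=> _; have := path_ok x; rewrite xy !nth_bits xS yS.
- by move=> /eqP y0; move: chord_ok; rewrite -xy -y0 !nth_bits xS yS.
- by move=> _; have := path_ok y; rewrite xy !nth_bits xS yS.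
by move=> /eqP x0; move: chord_ok; rewrite -xy -x0 !nth_bits xS yS.
Qed.

Lemma indep_coef0 (T : finType) (adj : rel T) : indep_coef adj 0 = 1.
Proof.
rewrite -(cards1 (set0 : {set T})); apply: eq_card => S; rewrite !inE cards_eq0 andbC.
by case: eqP => // ->; apply/forall_inP => x; rewrite inE.
Qed.

Lemma eq_indep_coef (T : finType) (adj adj' : rel T) :
  adj =2 adj' -> indep_coef adj =1 indep_coef adj'.
Proof.
move=> eq_adj k; apply: eq_card => S; rewrite !inE /independent.
by under eq_forallb => x do under eq_forallb => y do rewrite eq_adj.
Qed.

Lemma indep_coef_chord N e k :
  e < N -> indep_coef (chord_adj N e) k = weight_count (chord_indep e) N k.
Proof.
move=> e_lt; rewrite /indep_coef /weight_count -card_bits; apply: eq_card => S.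
by rewrite !inE independent_chord // count_bits.
Qed.

Lemma weight_count_cycle n k :
  weight_count (chord_indep n.+2) n.+3 k =
    path_count n.+2 k + (if k is j.+1 then path_count n j else 0).
Proof.
rewrite weight_countS; congr (_ + _); case: k => // j.
by rewrite weight_count_head0 ?path_count_last0 // => s; rewrite /chord_indep /= andbF.
Qed.

Lemma weight_count_tadpole n k :
  weight_count (chord_indep n) n.+3 k = weight_count (chord_indep n) n.+1 k +
    (if k is j.+1 then path_count n j + weight_count (chord_indep n) n.+1 j else 0).
Proof.
(* Reversed, the string starts with y_2, y_1 and the chord joins positions 2 and m+1. *)
pose Q s := ~~ (nth false s 2 && nth false s n.+2) && path_indep s.
rewrite -weight_count_rev (@eq_weight_count _ _ Q); last first.
  move=> s s_n; rewrite /chord_indep /Q path_indep_rev !nth_rev s_n ?ltnS ?leqW //.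
  have -> : n.+3 - n.+1 = 2 by lia.
  by rewrite subn1 [nth _ _ n.+2 && _]andbC.
rewrite weight_countS [X in X + _]weight_countS; case: k => [|j]; rewrite ?addn0 //.
rewrite -addnA; congr (_ + _); congr (_ + _);
  by rewrite weight_count_head0 // => s; rewrite /Q /= andbF.
Qed.

Definition cycle_coef m k := 'C(m - k, k) + (if k is j.+1 then 'C(m - j.+2, j) else 0).

Lemma indep_coef_cycle m k : 2 < m -> indep_coef (cycle_adj m) k = cycle_coef m k.
Proof.
case: m => [|[|[|n]]] // _.
rewrite -[cycle_adj _]/(chord_adj n.+3 n.+2) indep_coef_chord // weight_count_cycle.
by case: k => [|j]; rewrite !path_count_bin /cycle_coef ?subSS.
Qed.

Lemma tadpole_adj_chord m : 0 < m -> tadpole_adj m 2 =2 chord_adj (m + 2) m.-1.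
Proof.
by move=> m_gt0 x y; rewrite /tadpole_adj /chord_adj /tadpole_edge /chord_edge; congr orb; lia.
Qed.

Lemma indep_coef_tadpole m k : 0 < m ->
  indep_coef (tadpole_adj m 2) k.+1 =
    indep_coef (cycle_adj m) k.+1 + 'C(m - k, k) + indep_coef (cycle_adj m) k.
Proof.
case: m => // n _; rewrite (eq_indep_coef (tadpole_adj_chord _)) // indep_coef_chord; last lia.
rewrite addn2 weight_count_tadpole path_count_bin -[cycle_adj _]/(chord_adj n.+1 n).
by rewrite !indep_coef_chord // addnA.
Qed.

(** * Coefficient ratios *)

Lemma mul_bin_antidiag m j :
  j.+1 * (m - j) * 'C(m - j.+1, j.+1) = (m - j.*2) * (m - j.*2.+1) * 'C(m - j, j).
Proof.
rewrite mulnAC mul_bin_left -mulnA [_ * (m - j)]mulnC [X in 'C(X, j)]subnS.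
by rewrite mul_bin_down -!subnDA addSn addnn mulnA [_ * (m - j.*2)]mulnC.
Qed.

Lemma mul_cycle_coef m k : (m - k) * cycle_coef m k = m * 'C(m - k, k).
Proof.
case: k => [|j]; first by rewrite /cycle_coef subn0 addn0.
rewrite /cycle_coef mulnDr [m - j.+2]subnS mul_bin_diag -mulnDl.
case: (leqP j.+1 m) => [/subnK -> // | m_lt].
by move/ltnW: m_lt; rewrite -subn_eq0 => /eqP ->; rewrite bin_small ?muln0.
Qed.

Lemma cycle_coef_ratio m j : j.+1 < m ->
  j.+1 * (m - j.+1) * cycle_coef m j.+1 = (m - j.*2) * (m - j.*2.+1) * cycle_coef m j.
Proof.
move=> j_lt; apply/eqP; rewrite -(eqn_pmul2l (_ : 0 < m - j)); last by rewrite subn_gt0 ltnW.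
rewrite -mulnA mul_cycle_coef.
have -> : (m - j) * (j.+1 * (m * 'C(m - j.+1, j.+1))) =
          m * (j.+1 * (m - j) * 'C(m - j.+1, j.+1)) by lia.
rewrite mul_bin_antidiag.
have -> : m * ((m - j.*2) * (m - j.*2.+1) * 'C(m - j, j)) =
          (m - j.*2) * (m - j.*2.+1) * (m * 'C(m - j, j)) by lia.
by rewrite -mul_cycle_coef; apply/eqP; lia.
Qed.

(* By cycle_coef_ratio, [cycle_rises m j] means s_j(C_m) < s_{j+1}(C_m). *)
Definition cycle_rises m j : bool := j.+1 * (m - j.+1) < (m - j.*2) * (m - j.*2.+1).

Lemma cycle_rises0 m : 1 < m -> cycle_rises m 0.
Proof. rewrite /cycle_rises; nia. Qed.

Lemma cycle_not_rises m : ~~ cycle_rises m m.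
Proof. rewrite /cycle_rises; nia. Qed.

Lemma cycle_rises_lt m j : cycle_rises m j -> j.*2.+1 < m.
Proof. by move/(leq_ltn_trans (leq0n _)); rewrite muln_gt0 !subn_gt0 => /andP[]. Qed.

Lemma cycle_rises_stop m j : ~~ cycle_rises m j -> ~~ cycle_rises m j.+1.
Proof.
rewrite /cycle_rises -!leqNgt.
have [m_le | /subnK <-] := leqP m j.*2.+2.
  by rewrite (_ : m - j.+1.*2 = 0) ?mul0n //; lia.
set d := m - _; rewrite !doubleS.
have -> : d + j.*2.+3 - j.*2 = d.+3 by lia.
have -> : d + j.*2.+3 - j.*2.+1 = d.+2 by lia.
have -> : d + j.*2.+3 - j.*2.+2 = d.+1 by lia.
have -> : d + j.*2.+3 - j.*2.+3 = d by lia.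
have -> : d + j.*2.+3 - j.+1 = j + d.+2 by lia.
have -> : d + j.*2.+3 - j.+2 = j + d.+1 by lia.
nia.
Qed.

Lemma cycle_rises_bin m j :
  cycle_rises m j.+1 -> j.+1 * (m - j) <= (m - j.*2) * (m - j.*2.+1).
Proof.
move=> rises; have := cycle_rises_lt rises; rewrite doubleS => /subnK m_eq.
move: rises; rewrite /cycle_rises -{}m_eq; set d := m - _; rewrite !doubleS.
have -> : d + j.*2.+4 - j.*2 = d.+4 by lia.
have -> : d + j.*2.+4 - j.*2.+1 = d.+3 by lia.
have -> : d + j.*2.+4 - j.*2.+2 = d.+2 by lia.
have -> : d + j.*2.+4 - j.*2.+3 = d.+1 by lia.
have -> : d + j.*2.+4 - j = j + d.+4 by lia.
have -> : d + j.*2.+4 - j.+2 = j + d.+2 by lia.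
nia.
Qed.

Lemma ltn_cross u v x y : v * y = u * x -> v < u -> 0 < x -> x < y.
Proof. nia. Qed.

Lemma leq_cross u v x y : v * y = u * x -> u <= v -> 0 < v -> y <= x.
Proof. nia. Qed.

Lemma cycle_coef_lt m j : cycle_rises m j -> cycle_coef m j < cycle_coef m j.+1.
Proof.
move=> rises; have j_lt := cycle_rises_lt rises.
apply: ltn_cross (cycle_coef_ratio _) rises _; first lia.
by rewrite ltn_addr // bin_gt0; lia.
Qed.

Lemma cycle_coef_le m j :
  2 < m -> ~~ cycle_rises m j -> cycle_coef m j.+1 <= cycle_coef m j.
Proof.
move=> m_gt2 stops; have [j_lt | m_le] := ltnP j.+1 m.
  apply: leq_cross (cycle_coef_ratio j_lt) _ _; first by rewrite leqNgt.
  by rewrite muln_gt0 subn_gt0 j_lt.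
by rewrite [cycle_coef m j.+1]/cycle_coef !bin_small //; lia.
Qed.

Lemma bin_antidiagS_le m j : ~~ cycle_rises m j -> 'C(m - j.+1, j.+1) <= 'C(m - j, j).
Proof.
move=> stops; have [j_lt | m_le] := ltnP j m; last by rewrite bin_small //; lia.
apply: leq_cross (mul_bin_antidiag m j) _ _; last by rewrite muln_gt0 subn_gt0 j_lt.
apply: leq_trans (_ : _ <= j.+1 * (m - j.+1)) _; first by rewrite leqNgt.
by rewrite leq_mul2l leq_sub2l ?orbT.
Qed.

Lemma bin_antidiag_leS m j : cycle_rises m j.+1 -> 'C(m - j, j) <= 'C(m - j.+1, j.+1).
Proof.
move=> rises; have j_lt := cycle_rises_lt rises.
apply: leq_cross (esym (mul_bin_antidiag m j)) (cycle_rises_bin rises) _.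
by apply: leq_trans (cycle_rises_bin rises); rewrite muln_gt0 subn_gt0; lia.
Qed.

Lemma cycle_indep_coef_shape m : 2 < m ->
  let s := indep_coef (cycle_adj m) in
  exists2 r, 0 < r &
    [/\ forall j, j < r -> s j < s j.+1, forall j, r <= j -> s j.+1 <= s j,
        forall j, j.+1 < r -> 'C(m - j, j) <= 'C(m - j.+1, j.+1) &
        forall j, r <= j -> 'C(m - j.+1, j.+1) <= 'C(m - j, j)].
Proof.
move=> m_gt2 s.
have stop_ex : exists j, ~~ cycle_rises m j by exists m; exact: cycle_not_rises.
case: (ex_minnP stop_ex) => r r_stops r_min.
have rises j : j < r -> cycle_rises m j by rewrite ltnNge; apply: contraNT; exact: r_min.
have stops j : r <= j -> ~~ cycle_rises m j.
  by move=> /subnK <-; elim: (j - r) => // d; exact: cycle_rises_stop.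
exists r.
  by rewrite lt0n; apply: contraNneq r_stops => ->; exact: cycle_rises0 (ltnW m_gt2).
split=> j; rewrite /s ?indep_coef_cycle //.
- by move/rises; exact: cycle_coef_lt.
- by move/stops; exact: cycle_coef_le.
- by move/rises; exact: bin_antidiag_leS.
by move/stops; exact: bin_antidiagS_le.
Qed.

Theorem proposition3p2 (m : nat) (hm : 5 <= m) :
  unimodal (indep_coef (tadpole_adj m 2)) /\
  exists rho i : nat,
    is_mode (indep_coef (cycle_adj m)) rho /\
    is_mode (indep_coef (tadpole_adj m 2)) i /\
    (i = rho \/ i = rho.+1).
Proof.
have m_gt2 : 2 < m by apply: leq_trans hm.
have [r r_gt0 [cyc_up cyc_down bin_up bin_down]] := cycle_indep_coef_shape m_gt2.
have [|tad_unimodal [i tad_mode i_r]] :=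
  shifted_sum_mode r_gt0 cyc_up cyc_down bin_up bin_down _
    (fun k => indep_coef_tadpole k (ltnW (ltnW m_gt2))).
  by rewrite !indep_coef0.
split=> //; exists r, i; split=> //.
by have [] := peak_mode r_gt0 cyc_up cyc_down.
Qed.
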